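(* Let $\mathcal{CP}$ be a $d$-dimensional cube packing with $N$ cubes, and write $N=4q+r$ with integers $q\geq 0$, $0\le r\le 3$. Then $$m_1(\mathcal{CP})=\left(\frac{3^d}{4^d}\right)N\quad\text{and}\quad m_1(\mathcal{CP})+N(N-1)2^{-d}+2^{-d}\,d\,\{2q(q-1)+rq\}\le m_2(\mathcal{CP}).$$
   Context: A $d$-dimensional cube packing is a $4\mathbb{Z}^d$-invariant set of pairwise disjoint translates $y+[0,2[^d$ with $y\in\mathbb{Z}^d$; its number of cubes $N$ is the number of $4\mathbb{Z}^d$-orbits of its cubes. For $z\in\mathbb{Z}^d$, $N_z(\mathcal{CP})$ is the number of cubes of $\mathcal{CP}$ contained in $z+[0,4[^d$. For a $4\mathbb{Z}^d$-periodic function $g$ on $\mathbb{Z}^d$, its average is $E(g)=4^{-d}\sum_{z\in\{0,1,2,3\}^d}g(z)$, and the $i$-th moment of $\mathcal{CP}$ is $m_i(\mathcal{CP})=E(N_z(\mathcal{CP})^i)$. *)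

From HB Require Import structures.
From mathcomp Require Import all_boot all_order all_algebra.
From mathcomp Require Import boolp classical_sets reals Rstruct.
From Stdlib Require Rdefinitions.

Set Implicit Arguments.
Unset Strict Implicit.
Unset Printing Implicit Defensive.

Import Order.TTheory GRing.Theory Num.Theory.
Local Open Scope ring_scope.
Local Open Scope classical_set_scope.

Definition zvec (d : nat) := 'I_d -> int.
Definition rvec (d : nat) := 'I_d -> Rdefinitions.R.

Definition cube (d : nat) (y : zvec d) : set (rvec d) :=
  [set x | forall i, ((y i)%:~R <= x i) && (x i < (y i)%:~R + 2)].

Definition box4 (d : nat) (z : zvec d) : set (rvec d) :=
  [set x | forall i, ((z i)%:~R <= x i) && (x i < (z i)%:~R + 4)].

Definition zadd (d : nat) (y z : zvec d) : zvec d := fun i => y i + z i.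

Definition emb (d : nat) (w : {ffun 'I_d -> 'I_4}) : zvec d :=
  fun i => ((w i : nat) : int).

(* A cube packing is given by the set Y of integer corners y of its cubes
   y + [0,2[^d. *)
Definition is_cube_packing (d : nat) (Y : zvec d -> bool) : Prop :=
  (forall (y k : zvec d), Y y -> Y (fun i => y i + 4 * k i)) /\
  (forall (y y' : zvec d), Y y -> Y y' -> y <> y' ->
     cube y `&` cube y' = set0).

(* Number of cubes = number of 4Z^d-orbits of cubes; each orbit has exactly
   one corner in {0,1,2,3}^d. *)
Definition ncubes (d : nat) (Y : zvec d -> bool) : nat :=
  #|[set w : {ffun 'I_d -> 'I_4} | Y (emb w)]|.

(* N_z(CP): number of cubes of CP contained in z + [0,4[^d.  The corner of
   such a cube lies in the box, hence is of the form z + w, w in {0,..,3}^d. *)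
Definition Nz (d : nat) (Y : zvec d -> bool) (z : zvec d) : nat :=
  #|[set w : {ffun 'I_d -> 'I_4} |
      Y (zadd z (emb w)) && `[< cube (zadd z (emb w)) `<=` box4 z >]]|.

(* Average of a 4Z^d-periodic function on Z^d. *)
Definition avg (d : nat) (g : zvec d -> Rdefinitions.R) : Rdefinitions.R :=
  (4%:R ^+ d)^-1 * \sum_(w : {ffun 'I_d -> 'I_4}) g (emb w).

Definition moment (d : nat) (Y : zvec d -> bool) (k : nat) : Rdefinitions.R :=
  avg (fun z => (Nz Y z)%:R ^+ k).

From HB Require Import structures.
From mathcomp Require Import all_boot all_order all_algebra.
From mathcomp Require Import boolp classical_sets reals Rstruct.
From Stdlib Require Rdefinitions.
From mathcomp Require Import ring lra zify.
Import Order.TTheory GRing.Theory Num.Theory.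

Set Implicit Arguments.
Unset Strict Implicit.
Unset Printing Implicit Defensive.

(* Identify a cube with the residue a in (Z/4)^d of its corner, and a box
   z + [0,4[^d with the residue of z.  The cube lies in the box iff every
   coordinate of a - z is at most 2 mod 4, so each cube lies in 3^d of the 4^d
   boxes, which gives m_1, and two cubes a, b lie together in
   prod_i (if a_i = b_i then 3 else 2) boxes, so 4^d m_2 is the sum of these
   products over all ordered pairs of cubes.  Off the diagonal, Bernoulli's
   inequality 2 * 3^k * 2^(d-k) >= 2^d (2 + k) bounds such a product below in
   terms of the number k of coordinates on which a and b agree; and, for each
   coordinate, the number of ordered pairs of distinct cubes agreeing there is
   smallest when the N = 4q + r cubes are spread as evenly as possible over the
   4 residues, where it is 4q(q-1) + 2qr. *)

Lemma bernoulli_3_2 k : 2 ^ k * (2 + k) <= 2 * 3 ^ k.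
Proof. by elim: k => [|k IHk] //; rewrite !expnS; nia. Qed.

Lemma prod_3_2_ge (I : finType) (A : {pred I}) :
  2 ^ #|I| * (2 + #|A|) <= 2 * \prod_i (if i \in A then 3 else 2).
Proof.
rewrite (bigID (mem A)) /= (eq_bigr (fun=> 3)); last by move=> i ->.
rewrite [\prod_(i | i \notin A) _](eq_bigr (fun=> 2)); last by move=> i /negbTE ->.
rewrite !prod_nat_const -(cardC A) expnD.
rewrite -[X in _ <= X]/(2 * (3 ^ #|A| * 2 ^ #|[predC A]|)).
have := bernoulli_3_2 #|A|; nia.
Qed.

Lemma linear_le_sqrn n q : (2 * q + 1) * n <= n ^ 2 + q * (q + 1).
Proof.
have [le_nq | lt_qn] := leqP n q.
  have [k ->] : exists k, q = n + k by exists (q - n); lia.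
  nia.
have [k ->] : exists k, n = q + 1 + k by exists (n - q - 1); lia.
nia.
Qed.

Lemma sum_sqrn_ge (I : finType) (n : I -> nat) q r :
  \sum_i n i = #|I| * q + r -> #|I| * q ^ 2 + 2 * q * r + r <= \sum_i n i ^ 2.
Proof.
move=> sum_n.
have : \sum_i (2 * q + 1) * n i <= \sum_i (n i ^ 2 + q * (q + 1)).
  by apply: leq_sum => i _; apply: linear_le_sqrn.
rewrite -big_distrr big_split /= sum_n sum_nat_const -/#|I|.
set S := \sum_i _; nia.
Qed.

Lemma card_sumb (T : finType) (B : {pred T}) : #|B| = \sum_t (t \in B).
Proof. by rewrite -sum1_card big_mkcond; apply: eq_bigr => t _; case: (t \in B). Qed.

Section EqualPairs.
Variables (T V : finType) (f : T -> V) (A : {pred T}).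

Lemma sum_eq_pairsE :
  \sum_(a in A) \sum_(b in A) (f a == f b) = \sum_v #|[pred a in A | f a == v]| ^ 2.
Proof.
rewrite (partition_big f xpredT) //=; apply: eq_bigr => v _.
rewrite expnS expn1 -[in X in X * _]sum1_card big_distrl /=.
apply: eq_big => [a | a /andP [_ /eqP fa_v]]; first by rewrite !inE.
rewrite mul1n -sum1_card big_mkcond [RHS]big_mkcond /=; apply: eq_bigr => b _.
by rewrite !inE fa_v eq_sym; case: (b \in A).
Qed.

Lemma eq_pairs_off_diag_ge q r : #|A| = #|V| * q + r ->
  #|V| * (q * (q - 1)) + 2 * q * r
    <= \sum_(a in A) \sum_(b in A | b != a) (f a == f b).
Proof.
move=> card_A.
have fibers : \sum_v #|[pred a in A | f a == v]| = #|V| * q + r.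
  rewrite -card_A -sum1_card (partition_big f xpredT) //=.
  by apply: eq_bigr => v _; rewrite sum1_card.
have diag : \sum_(a in A) \sum_(b in A) (f a == f b)
    = #|A| + \sum_(a in A) \sum_(b in A | b != a) (f a == f b).
  rewrite -sum1_card -big_split /=; apply: eq_bigr => a Aa.
  by rewrite (bigD1 a) //= eqxx.
have := sum_sqrn_ge fibers; rewrite -sum_eq_pairsE diag card_A.
case: q {card_A fibers} => [|q]; first lia.
rewrite subn1 /=; nia.
Qed.

End EqualPairs.

Section AgreementProducts.
Variables (I V : finType) (A : {pred {ffun I -> V}}).

Lemma sum_card_agree_ge q r : #|A| = #|V| * q + r ->
  #|I| * (#|V| * (q * (q - 1)) + 2 * q * r)
    <= \sum_(a in A) \sum_(b in A | b != a) #|[pred i | a i == b i]|.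
Proof.
move=> card_A.
have -> : \sum_(a in A) \sum_(b in A | b != a) #|[pred i | a i == b i]|
    = \sum_i \sum_(a in A) \sum_(b in A | b != a) (a i == b i).
  rewrite exchange_big /=; apply: eq_bigr => a _.
  rewrite exchange_big /=; apply: eq_bigr => b _.
  by rewrite card_sumb; apply: eq_bigr => i _; rewrite inE.
rewrite -sum_nat_const; apply: leq_sum => i _.
exact: (eq_pairs_off_diag_ge (fun a : {ffun I -> V} => a i)).
Qed.

Lemma sum_prod_agree_ge q r : #|A| = #|V| * q + r ->
  2 * (3 ^ #|I| * #|A|)
    + 2 ^ #|I| * (2 * (#|A| * (#|A| - 1)) + #|I| * (#|V| * (q * (q - 1)) + 2 * q * r))
  <= 2 * \sum_(a in A) \sum_(b in A) \prod_i (if a i == b i then 3 else 2).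
Proof.
move=> card_A.
set agree := fun a b : {ffun I -> V} => #|[pred i | a i == b i]|.
have diag a : a \in A -> \sum_(b in A) \prod_i (if a i == b i then 3 else 2)
    = 3 ^ #|I| + \sum_(b in A | b != a) \prod_i (if a i == b i then 3 else 2).
  move=> Aa; rewrite (bigD1 a) //= (eq_bigr (fun=> 3)) => [|i _]; last by rewrite eqxx.
  by rewrite prod_nat_const.
have off_diag a b :
    2 ^ #|I| * (2 + agree a b) <= 2 * \prod_i (if a i == b i then 3 else 2).
  rewrite (eq_bigr (fun i => if i \in [pred i | a i == b i] then 3 else 2)) //.
  exact: prod_3_2_ge.
have pairs : \sum_(a in A) \sum_(b in A | b != a) 2 = 2 * (#|A| * (#|A| - 1)).
  rewrite (eq_bigr (fun=> 2 * (#|A| - 1))) => [|a Aa]; first by rewrite sum_nat_const mulnCA.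
  rewrite (cardD1 a) Aa add1n subn1 /= mulnC -sum_nat_const.
  by apply: eq_bigl => b; rewrite !inE andbC.
rewrite (eq_bigr _ diag) big_split /= sum_nat_const [X in _ <= X]mulnDr.
rewrite [#|A| * 3 ^ _]mulnC leq_add2l.
apply: (@leq_trans (2 ^ #|I| * \sum_(a in A) \sum_(b in A | b != a) (2 + agree a b))).
  have -> : \sum_(a in A) \sum_(b in A | b != a) (2 + agree a b)
      = \sum_(a in A) \sum_(b in A | b != a) 2
        + \sum_(a in A) \sum_(b in A | b != a) agree a b.
    by rewrite -big_split; apply: eq_bigr => a _; rewrite -big_split.
  by rewrite pairs leq_mul2l leq_add2l sum_card_agree_ge ?orbT.
rewrite !big_distrr /=; apply: leq_sum => a _; rewrite !big_distrr /=.
by apply: leq_sum => b _; apply: off_diag.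
Qed.

End AgreementProducts.

Section DoubleCounting.
Variables (T U : finType) (R : T -> U -> bool) (A : {pred U}).

Lemma sum_card_rel : \sum_t #|[set u in A | R t u]| = \sum_(u in A) #|[set t | R t u]|.
Proof.
under eq_bigr do rewrite card_sumb big_mkcond.
rewrite exchange_big [RHS]big_mkcond; apply: eq_bigr => u _.
rewrite card_sumb; case: (boolP (u \in A)) => Au.
  by apply: eq_bigr => t _; rewrite !inE Au.
by rewrite big1 // => t _; rewrite inE (negbTE Au).
Qed.

Lemma sum_card_rel_sqr : \sum_t #|[set u in A | R t u]| ^ 2
  = \sum_(u in A) \sum_(v in A) #|[set t | R t u && R t v]|.
Proof.
have sqr t : #|[set u in A | R t u]| ^ 2 = \sum_(u in A) \sum_(v in A) (R t u && R t v).
  rewrite expnS expn1 {1}card_sumb big_distrl /= [RHS]big_mkcond.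
  apply: eq_bigr => u _; rewrite inE; case: (u \in A) (R t u) => [] [] //=.
    rewrite mul1n card_sumb [RHS]big_mkcond; apply: eq_bigr => v _.
    by rewrite inE; case: (v \in A).
  by rewrite big1.
rewrite (eq_bigr _ (fun t _ => sqr t)) exchange_big; apply: eq_bigr => u _.
rewrite exchange_big; apply: eq_bigr => v _.
by rewrite card_sumb; apply: eq_bigr => t _; rewrite inE.
Qed.

End DoubleCounting.

Lemma card_ffun_forall (I V : finType) (P : I -> {pred V}) :
  #|[set f : {ffun I -> V} | [forall i, f i \in P i]]| = \prod_i #|P i|.
Proof.
under [RHS]eq_bigr do rewrite card_sumb.
rewrite bigA_distr_bigA card_sumb; apply: eq_bigr => f _.
rewrite inE; case: (boolP [forall i, _]) => [/forallP all_P | /forallPn [i not_Pi]].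
  by rewrite big1 // => i _; rewrite all_P.
by rewrite (bigD1 i) //= (negbTE not_Pi).
Qed.

(* [fits t x]: a cube whose corner is x mod 4 lies in the box of side 4 whose
   corner is t mod 4 (in one coordinate). *)
Definition fits (t x : 'I_4) : bool := val (x - t)%R <= 2.

Lemma card_fits x : #|[pred t | fits t x]| = 3.
Proof. by case: x => [[|[|[|[|//]]]] ?]; rewrite card_sumb !big_ord_recl big_ord0. Qed.

Lemma card_fits2 x y : #|[pred t | fits t x && fits t y]| = if x == y then 3 else 2.
Proof.
case: x y => [[|[|[|[|//]]]] ?] [[|[|[|[|//]]]] ?].
all: by rewrite card_sumb !big_ord_recl big_ord0.
Qed.

Section Boxes.
Variable d : nat.
Implicit Types z a b : {ffun 'I_d -> 'I_4}.

Definition fits_box z a : bool := [forall i, fits (z i) (a i)].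

Lemma card_fits_box a : #|[set z | fits_box z a]| = 3 ^ d.
Proof.
have -> : [set z | fits_box z a]
    = [set z : {ffun 'I_d -> 'I_4} | [forall i, z i \in [pred t | fits t (a i)]]].
  by apply/setP => z; rewrite !inE.
rewrite card_ffun_forall (eq_bigr (fun=> 3)); last by move=> i _; apply: card_fits.
by rewrite prod_nat_const card_ord.
Qed.

Lemma card_fits_box2 a b :
  #|[set z | fits_box z a && fits_box z b]| = \prod_i (if a i == b i then 3 else 2).
Proof.
have -> : [set z | fits_box z a && fits_box z b]
    = [set z : {ffun 'I_d -> 'I_4} |
         [forall i, z i \in [pred t | fits t (a i) && fits t (b i)]]].
  apply/setP => z; rewrite !inE.
  apply/andP/forallP => [[/forallP za /forallP zb] i | zab].
    by rewrite inE za zb.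
  by split; apply/forallP => i; have /andP [] := zab i.
by rewrite card_ffun_forall; apply: eq_bigr => i _; apply: card_fits2.
Qed.

End Boxes.

Local Open Scope ring_scope.

Lemma in_mksetb (T : Type) (P : T -> bool) x : (x \in [set y | P y]%classic) = P x.
Proof. by rewrite /in_mem /= /in_set asboolb. Qed.

Definition corners d (Y : zvec d -> bool) : {set {ffun 'I_d -> 'I_4}} :=
  [set a | Y (emb a)].

Lemma ncubesE d (Y : zvec d -> bool) : ncubes Y = #|corners Y|.
Proof. by apply: eq_card => a; rewrite in_mksetb inE. Qed.

Lemma cube_sub_box4 d (z : zvec d) (w : {ffun 'I_d -> 'I_4}) :
  `[< (cube (zadd z (emb w)) `<=` box4 z)%classic >] = [forall i, (w i <= 2)%N].
Proof.
apply/asboolP/forallP => [sub i | w_le2 x cube_x i].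
- rewrite leqNgt; apply/negP => w_gt2.
  pose x : rvec d := fun j => (zadd z (emb w) j)%:~R + 1.
  have /sub/(_ i)/andP [_] : cube (zadd z (emb w)) x.
    by move=> j; rewrite /x; apply/andP; split; lra.
  rewrite /x /zadd /emb rmorphD /=.
  have -> : (w i : nat) = 3%N by have := ltn_ord (w i); lia.
  lra.
- have /andP [lo hi] := cube_x i.
  have wi_le2 : (w i : nat)%:R <= 2 :> Rdefinitions.R by rewrite ler_nat.
  have w_ge0 : 0 <= (w i : nat)%:R :> Rdefinitions.R by [].
  move: lo hi; rewrite /zadd /emb rmorphD /= -[((w i : nat) : int)%:~R]/((w i : nat)%:R).
  by move=> lo hi; apply/andP; split; lra.
Qed.

Section PeriodicCorners.
Variables (d : nat) (Y : zvec d -> bool).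
Hypothesis Y_periodic : forall y k : zvec d, Y y -> Y (fun i => y i + 4 * k i).

Lemma periodicE (y k : zvec d) : Y (fun i => y i + 4 * k i) = Y y.
Proof.
apply/idP/idP => [Yyk | /Y_periodic //].
have := Y_periodic (fun i => - k i) Yyk.
by congr Y; apply: funext => i; lia.
Qed.

Lemma periodic_emb_add (z w : {ffun 'I_d -> 'I_4}) :
  Y (zadd (emb z) (emb w)) = Y (emb (z + w)).
Proof.
rewrite -[RHS](periodicE _ (fun i => ((z i + w i) %/ 4)%N : int)).
congr Y; apply: funext => i; rewrite /zadd /emb ffunE /=.
have := divn_eq (z i + w i) 4; lia.
Qed.

Lemma Nz_emb (z : {ffun 'I_d -> 'I_4}) :
  Nz Y (emb z) = #|[set a in corners Y | fits_box z a]|.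
Proof.
rewrite /Nz !card_sumb [RHS](reindex_inj (addrI z)) /=.
apply: eq_bigr => w _; rewrite in_mksetb !inE periodic_emb_add cube_sub_box4.
congr (Y _ && _ : nat); apply: eq_forallb => i.
by rewrite /fits ffunE [z i + _]addrC addrK.
Qed.

Lemma moment1E : moment Y 1 = (4%:R ^+ d)^-1 * (3 ^ d * ncubes Y)%N%:R.
Proof.
rewrite /moment /avg; congr (_ * _).
under eq_bigr do rewrite expr1 Nz_emb //.
rewrite -natr_sum sum_card_rel (eq_bigr _ (fun a _ => card_fits_box a)).
by rewrite sum_nat_const ncubesE mulnC.
Qed.

Lemma moment2E : moment Y 2 = (4%:R ^+ d)^-1 *
  (\sum_(a in corners Y) \sum_(b in corners Y) \prod_i (if a i == b i then 3 else 2))%N%:R.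
Proof.
rewrite /moment /avg; congr (_ * _).
rewrite (eq_bigr (fun w => (Nz Y (emb w) ^ 2)%N%:R)); last by move=> w _; rewrite natrX.
under eq_bigr do rewrite Nz_emb //.
rewrite -natr_sum sum_card_rel_sqr; congr _%:R.
by apply: eq_bigr => a _; apply: eq_bigr => b _; apply: card_fits_box2.
Qed.

End PeriodicCorners.

Lemma natrM_subn1 (R : pzRingType) n : n%:R * (n - 1)%:R = n%:R * (n%:R - 1) :> R.
Proof.
case: n => [|n]; first by rewrite !mul0r.
by rewrite subn1 /= -addn1 natrD addrK.
Qed.

Theorem theorem3 (d : nat) (Y : zvec d -> bool) (q r : nat) :
  is_cube_packing Y ->
  ncubes Y = (4 * q + r)%N -> (r <= 3)%N ->
  moment Y 1 = (3%:R ^+ d / 4%:R ^+ d) * (ncubes Y)%:R /\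
  moment Y 1 + (ncubes Y)%:R * ((ncubes Y)%:R - 1) * (2%:R ^+ d)^-1
    + (2%:R ^+ d)^-1 * d%:R * (2%:R * q%:R * (q%:R - 1) + r%:R * q%:R)
    <= moment Y 2.
Proof.
move=> [Y_periodic _] card_Y _.
split; first by rewrite moment1E // natrM natrX mulrA [_^-1 * _]mulrC.
have := sum_prod_agree_ge (A := corners Y) (q := q) (r := r).
rewrite card_ord -ncubesE card_ord => /(_ card_Y).
rewrite -(ler_nat Rdefinitions.R) !(natrM, natrD, natrX) !natrM_subn1.
rewrite moment1E // moment2E // natrM natrX.
set L := (X in X <= _); set S := (X in _ <= X) => key.
have two_d_gt0 : (0 : Rdefinitions.R) < 2%:R ^+ d by rewrite exprn_gt0.
have -> : (4%:R ^+ d : Rdefinitions.R) = 2%:R ^+ d * 2%:R ^+ d.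
  by rewrite -exprMn -natrM.
rewrite -(@ler_pM2l _ (2 * (2%:R ^+ d * 2%:R ^+ d))) ?mulr_gt0 //.
rewrite [X in X <= _](_ : _ = L) ?[X in _ <= X](_ : _ = S) // /L /S.
all: by field; rewrite gt_eqF.
Qed.
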